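(* Let $g:\mathbb R\to\mathbb R$ be continuous. Let $\tilde W\in C^2(\mathbb R)$ be nonnegative with $\tilde W(x)=0$ if and only if $x\in\{0,1\}$. For $\varepsilon>0$ define $f_\varepsilon,f_0:\mathcal V\to\mathbb R\cup\{+\infty\}$ by $$f_\varepsilon(u)=\sum_{i\in V}g\big((\Delta u)_i\big)+\frac1\varepsilon\sum_{i\in V}\tilde W(u_i),$$ $$f_0(u)=\begin{cases}\sum_{i\in V}g\big((\kappa^{1,r}_S)_i\big)&\text{if }u=\chi_S\text{ for some }S\subset V,\\+\infty&\text{otherwise.}\end{cases}$$ Then $f_\varepsilon$ $\Gamma$-converges to $f_0$ as $\varepsilon\to0$, with respect to the Euclidean topology on $\mathcal V\cong\mathbb R^n$. That is, for every sequence $\varepsilon_k\to0^+$ the following two conditions hold. First, for every $u\in\mathcal V$ and every sequence $u_k\to u$, $\liminf_k f_{\varepsilon_k}(u_k)\ge f_0(u)$. Second, for every $u\in\mathcal V$ there is a sequence $u_k\to u$ with $\limsup_kf_{\varepsilon_k}(u_k)\le f_0(u)$.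
   Context: $G=(V,E)$ is a finite undirected weighted graph with vertex set $V=\{1,\dots,n\}$. The weights satisfy $\omega_{ij}=\omega_{ji}\ge0$, with $\omega_{ij}>0$ iff $\{i,j\}\in E$, and $\omega_{ii}=0$. The degrees are $d_i=\sum_j\omega_{ij}>0$. Parameters $r\in[0,1]$ and $q\in[1/2,1]$ are fixed. $\mathcal V$ is the space of functions $V\to\mathbb R$, and $\chi_S$ is the indicator of $S\subset V$. The graph Laplacian is $(\Delta u)_i=d_i^{-r}\sum_j\omega_{ij}(u_i-u_j)$. The graph curvature of $S\subset V$ is the function $\kappa^{q,r}_S\in\mathcal V$ given by $(\kappa^{q,r}_S)_i=d_i^{-r}\sum_{j\in V\setminus S}\omega_{ij}^q$ if $i\in S$, and $(\kappa^{q,r}_S)_i=-d_i^{-r}\sum_{j\in S}\omega_{ij}^q$ if $i\notin S$. Here $\omega_{ij}^q:=0$ when $\omega_{ij}=0$. *)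

From Stdlib Require Import Reals Lra Classical ClassicalEpsilon.
Open Scope R_scope.

(* Vertices are 0..n-1 (paper's 1..n). Functions on V are nat -> R;
   only values at i < n matter. *)

Fixpoint vsum (n : nat) (f : nat -> R) : R :=
  match n with
  | O => 0
  | S m => vsum m f + f m
  end.

Definition deg (n : nat) (w : nat -> nat -> R) (i : nat) : R :=
  vsum n (fun j => w i j).

Definition lap (n : nat) (w : nat -> nat -> R) (r : R) (u : nat -> R) (i : nat) : R :=
  Rpower (deg n w i) (- r) * vsum n (fun j => w i j * (u i - u j)).

Definition wpow (x q : R) : R :=
  if Req_EM_T x 0 then 0 else Rpower x q.

Definition kappa (n : nat) (w : nat -> nat -> R) (q r : R) (S : nat -> bool) (i : nat) : R :=
  if S i
  then Rpower (deg n w i) (- r) * vsum n (fun j => if S j then 0 else wpow (w i j) q)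
  else - (Rpower (deg n w i) (- r) * vsum n (fun j => if S j then wpow (w i j) q else 0)).

Definition is_chi (n : nat) (S : nat -> bool) (u : nat -> R) : Prop :=
  forall i, (i < n)%nat -> u i = (if S i then 1 else 0).

Inductive ER : Type := Fin (x : R) | PInf.

Definition feps (n : nat) (w : nat -> nat -> R) (r : R) (g W : R -> R) (eps : R)
  (u : nat -> R) : R :=
  vsum n (fun i => g (lap n w r u i)) + / eps * vsum n (fun i => W (u i)).

Definition f0 (n : nat) (w : nat -> nat -> R) (r : R) (g : R -> R) (u : nat -> R) : ER :=
  match excluded_middle_informative (exists S, is_chi n S u) with
  | left H =>
      Fin (vsum n (fun i => g (kappa n w 1 r
             (proj1_sig (constructive_indefinite_description _ H)) i)))
  | right _ => PInf
  end.

Definition liminf_ge (a : nat -> R) (L : ER) : Prop :=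
  match L with
  | Fin l => forall m, m < l -> exists N, forall k, (N <= k)%nat -> m < a k
  | PInf => forall m, exists N, forall k, (N <= k)%nat -> m < a k
  end.

Definition limsup_le (a : nat -> R) (L : ER) : Prop :=
  match L with
  | Fin l => forall m, l < m -> exists N, forall k, (N <= k)%nat -> a k < m
  | PInf => True
  end.

(* convergence in V ≅ R^n (Euclidean topology = coordinatewise) *)
Definition vconv (n : nat) (uk : nat -> nat -> R) (u : nat -> R) : Prop :=
  forall i, (i < n)%nat -> Un_cv (fun k => uk k i) (u i).

(* The proof rests on three observations.
   1. On an indicator function χ_S the Laplacian is the curvature κ^{1,r}_S
      (since w^1 = w), and the double-well term vanishes, so f_ε(χ_S) = f_0(χ_S)
      for every ε: the constant sequence is a recovery sequence.
   2. u ↦ Σ_i g((Δu)_i) is continuous on R^n, because Δ is linear and g is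
      continuous.  Since the penalty (1/ε) Σ_i W(u_i) is nonnegative, this gives
      the liminf inequality whenever u is an indicator function.
   3. If u is not an indicator function, some u_i ∉ {0,1}, so W(u_i) > 0, and
      along u_k → u the penalty is eventually bounded below by W(u_i)/2; divided
      by ε_k → 0⁺ it diverges while the continuous part stays bounded. *)

From Stdlib Require Import Reals Lra Lia Classical ClassicalEpsilon.
Open Scope R_scope.

Lemma cv_const (c : R) : Un_cv (fun _ => c) c.
Proof.
  intros e He; exists O; intros k _.
  unfold R_dist; rewrite Rminus_diag, Rabs_R0; lra.
Qed.

Lemma cv_eventually_ge_half (x : nat -> R) (c : R) :
  Un_cv x c -> 0 < c -> exists N, forall k, (N <= k)%nat -> c / 2 <= x k.
Proof.
  intros Hx Hc; destruct (Hx (c / 2)) as [N HN]; [lra|].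
  exists N; intros k Hk; specialize (HN k Hk); unfold R_dist in HN.
  apply Rabs_def2 in HN; lra.
Qed.

Lemma derivable_everywhere_continuity (f f' : R -> R) :
  (forall x, derivable_pt_lim f x (f' x)) -> continuity f.
Proof.
  intros Hd x; apply derivable_continuous_pt; exists (f' x); apply Hd.
Qed.

Lemma vsum_ext (n : nat) (f h : nat -> R) :
  (forall j, (j < n)%nat -> f j = h j) -> vsum n f = vsum n h.
Proof.
  induction n as [|n IH]; simpl; intros H; [reflexivity|].
  rewrite IH by (intros; apply H; lia); rewrite H by lia; reflexivity.
Qed.

Lemma vsum_opp (n : nat) (f : nat -> R) : vsum n (fun j => - f j) = - vsum n f.
Proof. induction n as [|n IH]; simpl; [lra | rewrite IH; lra]. Qed.

Lemma vsum_zero (n : nat) : vsum n (fun _ => 0) = 0.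
Proof. induction n as [|n IH]; simpl; [reflexivity | rewrite IH; lra]. Qed.

Lemma vsum_nonneg (n : nat) (f : nat -> R) :
  (forall j, (j < n)%nat -> 0 <= f j) -> 0 <= vsum n f.
Proof.
  induction n as [|n IH]; simpl; intros H; [lra|].
  assert (0 <= vsum n f) by (apply IH; intros; apply H; lia).
  assert (0 <= f n) by (apply H; lia).
  lra.
Qed.

Lemma vsum_ge_term (n : nat) (f : nat -> R) (i : nat) :
  (forall j, (j < n)%nat -> 0 <= f j) -> (i < n)%nat -> f i <= vsum n f.
Proof.
  induction n as [|n IH]; simpl; intros H Hi; [lia|].
  assert (0 <= f n) by (apply H; lia).
  destruct (Nat.eq_dec i n) as [->|Hne].
  - assert (0 <= vsum n f) by (apply vsum_nonneg; intros; apply H; lia); lra.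
  - assert (f i <= vsum n f) by (apply IH; [intros; apply H|]; lia); lra.
Qed.

Lemma vsum_cv (n : nat) (f : nat -> nat -> R) (l : nat -> R) :
  (forall j, (j < n)%nat -> Un_cv (fun k => f k j) (l j)) ->
  Un_cv (fun k => vsum n (f k)) (vsum n l).
Proof.
  induction n as [|n IH]; simpl; intros H; [apply cv_const|].
  apply CV_plus; [apply IH; intros; apply H | apply H]; lia.
Qed.

Section LaplacianEnergy.

Variables (n : nat) (w : nat -> nat -> R) (r : R) (g : R -> R).

Lemma lap_cv (uk : nat -> nat -> R) (u : nat -> R) (i : nat) :
  vconv n uk u -> (i < n)%nat ->
  Un_cv (fun k => lap n w r (uk k) i) (lap n w r u i).
Proof.
  intros Hc Hi; unfold lap.
  apply CV_mult; [apply cv_const|]; apply vsum_cv; intros j Hj.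
  apply CV_mult; [apply cv_const|]; apply CV_minus; auto.
Qed.

Lemma lap_energy_cv (uk : nat -> nat -> R) (u : nat -> R) :
  continuity g -> vconv n uk u ->
  Un_cv (fun k => vsum n (fun i => g (lap n w r (uk k) i)))
        (vsum n (fun i => g (lap n w r u i))).
Proof.
  intros Hg Hc; apply (vsum_cv n (fun k i => g (lap n w r (uk k) i))).
  intros j Hj; apply continuity_seq; [apply Hg | apply lap_cv; auto].
Qed.

Lemma feps_chi (W : R -> R) (eps : R) (S : nat -> bool) (u : nat -> R) :
  W 0 = 0 -> W 1 = 0 -> is_chi n S u ->
  feps n w r g W eps u = vsum n (fun i => g (lap n w r u i)).
Proof.
  intros W0 W1 Hu; unfold feps.
  rewrite (vsum_ext n (fun i => W (u i)) (fun _ => 0)), vsum_zero; [ring|].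
  intros j Hj; rewrite (Hu j Hj); destruct (S j); assumption.
Qed.

(* Nonnegative weights: needed so that w_ij^1 = w_ij also when w_ij = 0. *)
Hypothesis Hnn : forall i j, (i < n)%nat -> (j < n)%nat -> 0 <= w i j.

Lemma wpow_one (x : R) : 0 <= x -> wpow x 1 = x.
Proof.
  intros H; unfold wpow; destruct (Req_EM_T x 0); [lra | apply Rpower_1; lra].
Qed.

Lemma lap_chi_kappa (S : nat -> bool) (u : nat -> R) (i : nat) :
  is_chi n S u -> (i < n)%nat -> lap n w r u i = kappa n w 1 r S i.
Proof.
  intros Hu Hi; unfold lap, kappa; rewrite (Hu i Hi).
  destruct (S i).
  - f_equal; apply vsum_ext; intros j Hj; rewrite (Hu j Hj).
    destruct (S j); [ring | rewrite wpow_one by auto; ring].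
  - rewrite Ropp_mult_distr_r, <- vsum_opp; f_equal; apply vsum_ext; intros j Hj.
    rewrite (Hu j Hj); destruct (S j); [rewrite wpow_one by auto; ring | ring].
Qed.

(* On indicator functions, f_0 is the Laplacian part of the energy
   (independently of which S the definition of f_0 picks). *)
Lemma f0_chi (S : nat -> bool) (u : nat -> R) :
  is_chi n S u -> f0 n w r g u = Fin (vsum n (fun i => g (lap n w r u i))).
Proof.
  intros Hu; unfold f0.
  destruct (excluded_middle_informative _) as [H|H]; [|exfalso; eauto].
  destruct (constructive_indefinite_description _ H) as [S' HS']; simpl.
  f_equal; apply vsum_ext; intros i Hi; rewrite (lap_chi_kappa S' u i HS' Hi); reflexivity.
Qed.

End LaplacianEnergy.

Lemma f0_not_chi (n : nat) (w : nat -> nat -> R) (r : R) (g : R -> R) (u : nat -> R) :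
  ~ (exists S, is_chi n S u) -> f0 n w r g u = PInf.
Proof.
  intros H; unfold f0; destruct (excluded_middle_informative _); [contradiction | reflexivity].
Qed.

Lemma not_chi_witness (n : nat) (u : nat -> R) :
  ~ (exists S, is_chi n S u) -> exists i, (i < n)%nat /\ u i <> 0 /\ u i <> 1.
Proof.
  intros Hnot; apply NNPP; intros Hno; apply Hnot.
  exists (fun i => if Req_EM_T (u i) 1 then true else false).
  intros i Hi; destruct (Req_EM_T (u i) 1); [assumption|].
  apply NNPP; intros H0; apply Hno; exists i; auto.
Qed.

Lemma liminf_ge_cv_plus_nonneg (a p : nat -> R) (l : R) :
  Un_cv a l -> (forall k, 0 <= p k) -> liminf_ge (fun k => a k + p k) (Fin l).
Proof.
  intros Ha Hp m Hm; destruct (Ha (l - m)) as [N HN]; [lra|].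
  exists N; intros k Hk; specialize (HN k Hk); specialize (Hp k).
  unfold R_dist in HN; apply Rabs_def2 in HN; lra.
Qed.

Lemma penalty_diverges (a b eps : nat -> R) (l c : R) :
  Un_cv a l -> Un_cv eps 0 -> (forall k, 0 < eps k) -> 0 < c ->
  (exists N, forall k, (N <= k)%nat -> c <= b k) ->
  liminf_ge (fun k => a k + / eps k * b k) PInf.
Proof.
  intros Ha Heps Hpos Hc [Nb HNb] m.
  destruct (Ha 1) as [Na HNa]; [lra|].
  set (K := Rmax 1 (m - l + 1)).
  assert (HK1 : 1 <= K) by apply Rmax_l.
  assert (HK2 : m - l + 1 <= K) by apply Rmax_r.
  destruct (Heps (c / K)) as [Ne HNe]; [apply Rdiv_lt_0_compat; lra|].
  exists (Na + Nb + Ne)%nat; intros k Hk.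
  specialize (HNa k ltac:(lia)); specialize (HNb k ltac:(lia)); specialize (HNe k ltac:(lia)).
  unfold R_dist in HNa, HNe; apply Rabs_def2 in HNa.
  rewrite Rminus_0_r, Rabs_pos_eq in HNe by (left; apply Hpos).
  pose proof (Hpos k) as Hek.
  assert (Hsmall : eps k * K < c).
  { apply Rmult_lt_reg_r with (/ K); [apply Rinv_0_lt_compat; lra|].
    replace (eps k * K * / K) with (eps k) by (field; lra); exact HNe. }
  assert (Hbig : K < / eps k * b k).
  { apply Rmult_lt_reg_r with (eps k); [exact Hek|].
    replace (/ eps k * b k * eps k) with (b k) by (field; lra); lra. }
  lra.
Qed.

Theorem mainTheorem4
  (n : nat) (w : nat -> nat -> R) (r q : R) (g W : R -> R)
  (Hsym : forall i j, (i < n)%nat -> (j < n)%nat -> w i j = w j i)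
  (Hnn : forall i j, (i < n)%nat -> (j < n)%nat -> 0 <= w i j)
  (Hdiag : forall i, (i < n)%nat -> w i i = 0)
  (Hdeg : forall i, (i < n)%nat -> 0 < deg n w i)
  (Hr : 0 <= r <= 1) (Hq : / 2 <= q <= 1)
  (Hg : continuity g)
  (HW2 : exists W1 W2 : R -> R,
      (forall x, derivable_pt_lim W x (W1 x)) /\
      (forall x, derivable_pt_lim W1 x (W2 x)) /\ continuity W2)
  (HWnn : forall x, 0 <= W x)
  (HW0 : forall x, W x = 0 <-> (x = 0 \/ x = 1))
  (eps : nat -> R) (Heps_pos : forall k, 0 < eps k) (Heps : Un_cv eps 0) :
  (forall (u : nat -> R) (uk : nat -> nat -> R),
      vconv n uk u ->
      liminf_ge (fun k => feps n w r g W (eps k) (uk k)) (f0 n w r g u)) /\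
  (forall u : nat -> R,
      exists uk : nat -> nat -> R,
        vconv n uk u /\
        limsup_le (fun k => feps n w r g W (eps k) (uk k)) (f0 n w r g u)).
Proof.
  assert (HWc : continuity W)
    by (destruct HW2 as [W1 [W2 [HW1 _]]]; exact (derivable_everywhere_continuity W W1 HW1)).
  assert (W0 : W 0 = 0) by (apply HW0; auto).
  assert (W1 : W 1 = 0) by (apply HW0; auto).
  split.
  -
    intros u uk Hc; unfold feps.
    pose proof (lap_energy_cv n w r g uk u Hg Hc) as Hlap.
    destruct (classic (exists S, is_chi n S u)) as [[S HS]|Hnot].
    + rewrite (f0_chi n w r g Hnn S u HS).
      apply liminf_ge_cv_plus_nonneg; [exact Hlap|]; intros k.
      apply Rmult_le_pos; [left; apply Rinv_0_lt_compat, Heps_pos|].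
      apply vsum_nonneg; auto.
    + rewrite (f0_not_chi n w r g u Hnot).
      destruct (not_chi_witness n u Hnot) as [i [Hi [Hu0 Hu1]]].
      assert (HWi : 0 < W (u i))
        by (destruct (HWnn (u i)) as [|E]; [assumption | symmetry in E; apply HW0 in E; tauto]).
      destruct (cv_eventually_ge_half (fun k => W (uk k i)) (W (u i))
                  (continuity_seq W _ _ (HWc _) (Hc i Hi)) HWi) as [N HN].
      apply (penalty_diverges _ _ eps _ (W (u i) / 2) Hlap Heps Heps_pos); [lra|].
      exists N; intros k Hk; apply Rle_trans with (W (uk k i)); [apply HN, Hk|].
      apply (vsum_ge_term n (fun j => W (uk k j))); auto.
  -
    intros u; exists (fun _ => u); split; [intros i Hi; apply cv_const|].
    destruct (classic (exists S, is_chi n S u)) as [[S HS]|Hnot];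
      [| rewrite (f0_not_chi n w r g u Hnot); exact I].
    rewrite (f0_chi n w r g Hnn S u HS); intros m Hm; exists O; intros k _.
    rewrite (feps_chi n w r g W (eps k) S u W0 W1 HS); exact Hm.
Qed.
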